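(* Let $H$ be an infinite dimensional real or complex Hilbert space and let $P,Q$ be projections on $H$ such that for every projection $R$ on $H$ with finite corank we have $RP=PR$ if and only if $RQ=QR$. Then either $P=Q$ or $P=I-Q$.
   Context: A projection means a self-adjoint idempotent bounded operator on $H$. A projection $R$ has finite corank if $I-R$ has finite rank. *)

From mathcomp Require Import all_boot all_algebra all_reals.
From mathcomp Require Export complex.
Import GRing.Theory Num.Theory.
Set Implicit Arguments. Unset Strict Implicit. Unset Printing Implicit Defensive.
Local Open Scope ring_scope.

(* Scalar field K (R for real, complex R for complex Hilbert spaces), with a
   conjugation [conj] (identity in the real case, Num.conj in the complex case).  Squared norm of x is
   [ip x x]; completeness is stated with squared norms (equivalent to norms). *)
Section Hilbert.
Variables (K : numFieldType) (V : lmodType K).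

Definition inner_product (conj : K -> K) (ip : V -> V -> K) : Prop :=
  [/\ (forall (a : K) (x x' y : V), ip (a *: x + x') y = a * ip x y + ip x' y),
      (forall x y : V, ip y x = conj (ip x y)),
      (forall x : V, 0 <= ip x x)
    & (forall x : V, ip x x = 0 -> x = 0)].

Definition ip_complete (ip : V -> V -> K) : Prop :=
  forall u : nat -> V,
    (forall e : K, 0 < e -> exists N : nat, forall m n : nat, (N <= m)%N -> (N <= n)%N ->
        ip (u m - u n) (u m - u n) < e) ->
    exists l : V, forall e : K, 0 < e -> exists N : nat, forall n : nat, (N <= n)%N ->
        ip (u n - l) (u n - l) < e.

Definition hilbert_space (conj : K -> K) (ip : V -> V -> K) : Prop :=
  inner_product conj ip /\ ip_complete ip.

Definition in_span (s : seq V) (x : V) : Prop :=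
  exists c : 'I_(size s) -> K, x = \sum_(i < size s) c i *: s`_i.

Definition infinite_dimensional : Prop :=
  forall s : seq V, exists x : V, ~ in_span s x.

Definition bounded_op (ip : V -> V -> K) (T : V -> V) : Prop :=
  exists M : K, forall x : V, ip (T x) (T x) <= M * ip x x.

Definition self_adjoint (ip : V -> V -> K) (T : V -> V) : Prop :=
  forall x y : V, ip (T x) y = ip x (T y).

Definition idempotent (T : V -> V) : Prop := forall x : V, T (T x) = T x.

Definition projection (ip : V -> V -> K) (T : {linear V -> V}) : Prop :=
  [/\ bounded_op ip T, self_adjoint ip T & idempotent T].

Definition finite_rank (T : V -> V) : Prop :=
  exists s : seq V, forall x : V, in_span s (T x).

Definition finite_corank (T : V -> V) : Prop := finite_rank (fun x => x - T x).

Definition ops_commute (A B : V -> V) : Prop := forall x : V, A (B x) = B (A x).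

End Hilbert.

(* For u <> 0, the orthogonal projection onto the hyperplane u^perp has
   corank one, and it commutes with a projection P exactly when P u = 0 or
   P u = u.  Hence P and Q have the same eigenvectors.  Since a set closed
   under addition on which every vector is fixed or killed by Q is entirely
   fixed or entirely killed, Q is 0 or the identity on the range of P and on
   its kernel; the four cases give Q = P, Q = I - P, or Q in {0, I}, and in
   the last case every vector is an eigenvector of P as well. *)

From HB Require Import structures.
From Pilot Require Import Defs.
From mathcomp Require Import all_boot all_algebra all_reals.
From mathcomp Require Import ring.
From Stdlib Require Import Classical.
Import GRing.Theory Num.Theory.
Set Implicit Arguments.
Unset Strict Implicit.
Unset Printing Implicit Defensive.

Local Open Scope ring_scope.

Section FixedOrKilled.
Variable U : zmodType.

Definition fixed_or_killed (T : U -> U) (a : U) : Prop := T a = a \/ T a = 0.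

Lemma fixed_or_killed_addr_closed (T : {additive U -> U}) (W : U -> Prop) :
  (forall a b, W a -> W b -> W (a + b)) ->
  (forall w, W w -> fixed_or_killed T w) ->
  (forall w, W w -> T w = w) \/ (forall w, W w -> T w = 0).
Proof.
move=> WD WT.
have [fixW|] := classic (forall w, W w -> T w = w); first exact: or_introl.
move=> /not_all_ex_not [w1 /(imply_to_and (W w1)) [Ww1 nfix1]].
have Tw1 : T w1 = 0 by case: (WT w1 Ww1).
right=> w2 Ww2; have [Tw2|//] := WT w2 Ww2.
have [Tsum|Tsum] := WT _ (WD _ _ Ww1 Ww2); rewrite raddfD Tw1 Tw2 add0r in Tsum.
- by case: nfix1; rewrite Tw1; apply: (addIr w2); rewrite add0r.
- by rewrite Tw2.
Qed.

Lemma fixed_or_killed_everywhere (T : {additive U -> U}) :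
  (forall x, fixed_or_killed T x) -> T =1 id \/ T =1 (fun=> 0).
Proof.
move=> TT; have [fixT|killT] := @fixed_or_killed_addr_closed T (fun _ => True)
  (fun _ _ _ _ => I) (fun w _ => TT w).
- by left=> x; exact: fixT.
- by right=> x; exact: killT.
Qed.

Lemma same_fixed_or_killed (P Q : {additive U -> U}) :
  (forall x, P (P x) = P x) ->
  (forall a, fixed_or_killed P a <-> fixed_or_killed Q a) ->
  P =1 Q \/ (forall x, P x = x - Q x).
Proof.
move=> idP PQ.
have splitQ x : Q x = Q (P x) + Q (x - P x) by rewrite -raddfD addrC subrK.
have killP x : P (x - P x) = 0 by rewrite raddfB idP subrr.
have trivialQ : Q =1 id \/ Q =1 (fun=> 0) ->
    P =1 Q \/ (forall x, P x = x - Q x).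
  move=> Qtriv; have Qeig x : fixed_or_killed Q x.
    by case: Qtriv => QQ; [left|right].
  have [Pid|P0] := fixed_or_killed_everywhere (fun x => proj2 (PQ x) (Qeig x)).
  - by case: Qtriv => [Qid|Q0]; [left|right] => x; rewrite Pid ?Qid ?Q0 ?subr0.
  - by case: Qtriv => [Qid|Q0]; [right|left] => x; rewrite P0 ?Qid ?Q0 ?subrr.
have rangeP_closed a b : P a = a -> P b = b -> P (a + b) = a + b.
  by move=> Pa Pb; rewrite raddfD Pa Pb.
have kerP_closed a b : P a = 0 -> P b = 0 -> P (a + b) = 0.
  by move=> Pa Pb; rewrite raddfD Pa Pb addr0.
have [QA|QA] := @fixed_or_killed_addr_closed Q _ rangeP_closed
  (fun a Pa => proj1 (PQ a) (or_introl Pa));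
have [QB|QB] := @fixed_or_killed_addr_closed Q _ kerP_closed
  (fun a Pa => proj1 (PQ a) (or_intror Pa)).
- by apply: trivialQ; left=> x; rewrite splitQ QA // QB // addrC subrK.
- by left=> x; rewrite splitQ QA // QB // addr0.
- by right=> x; rewrite splitQ QA // QB // add0r opprB addrC subrK.
- by apply: trivialQ; right=> x; rewrite splitQ QA // QB // addr0.
Qed.

End FixedOrKilled.

Section InnerProduct.
Variables (K : numFieldType) (V : lmodType K) (conj : {rmorphism K -> K}).
Variable ip : V -> V -> K.
Hypothesis ipP : inner_product conj ip.

Lemma ipDl x x' y : ip (x + x') y = ip x y + ip x' y.
Proof. by case: ipP => ipL _ _ _; rewrite -{1}[x]scale1r ipL mul1r. Qed.

Lemma ip0l y : ip 0 y = 0.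
Proof. by apply: (addIr (ip 0 y)); rewrite -ipDl !add0r. Qed.

Lemma ipZl a x y : ip (a *: x) y = a * ip x y.
Proof. by case: ipP => ipL _ _ _; rewrite -[a *: x]addr0 ipL ip0l addr0. Qed.

Lemma ipBl x x' y : ip (x - x') y = ip x y - ip x' y.
Proof. by rewrite ipDl -scaleN1r ipZl mulN1r. Qed.

Lemma ipC x y : ip y x = conj (ip x y).
Proof. by case: ipP. Qed.

Lemma ip0r x : ip x 0 = 0.
Proof. by rewrite ipC ip0l rmorph0. Qed.

Lemma ipDr x y y' : ip x (y + y') = ip x y + ip x y'.
Proof. by rewrite ipC ipDl rmorphD -!ipC. Qed.

Lemma ipZr a x y : ip x (a *: y) = conj a * ip x y.
Proof. by rewrite ipC ipZl rmorphM -ipC. Qed.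

Lemma ipBr x y y' : ip x (y - y') = ip x y - ip x y'.
Proof. by rewrite ipC ipBl rmorphB -!ipC. Qed.

Lemma ip_ge0 x : 0 <= ip x x.
Proof. by case: ipP. Qed.

Lemma ip_eq0 x : (ip x x == 0) = (x == 0).
Proof.
case: ipP => _ _ _ ip_def; apply/eqP/eqP => [/ip_def //|->]; exact: ip0l.
Qed.

(* Pythagoras for the orthogonal splitting x = T x + (x - T x). *)
Lemma self_adjoint_idempotent_bounded (T : {linear V -> V}) :
  self_adjoint ip T -> Defs.idempotent T -> bounded_op ip T.
Proof.
move=> saT idT; exists 1 => x; rewrite mul1r.
set y := x - T x.
have Ty0 : T y = 0 by rewrite linearB /= idT subrr.
have -> : ip x x = ip (T x + y) (T x + y) by rewrite /y addrC subrK.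
clearbody y.
have Tx_y : ip (T x) y = 0 by rewrite saT Ty0 ip0r.
have y_Tx : ip y (T x) = 0 by rewrite ipC Tx_y rmorph0.
by rewrite ipDl !ipDr Tx_y y_Tx addr0 add0r lerDl ip_ge0.
Qed.

Definition perp_proj (u x : V) : V := x - (ip x u / ip u u) *: u.

Lemma perp_proj_linear u : linear (perp_proj u).
Proof.
move=> a x y; rewrite /perp_proj ipDl ipZl mulrDl scalerDl -mulrA -scalerA.
by rewrite scalerBr opprD addrACA.
Qed.

Definition perp_projL u : {linear V -> V} :=
  HB.pack (perp_proj u)
    (GRing.isLinear.Build K V V *:%R _ (perp_proj_linear u)).

Section NonzeroVector.
Variable u : V.
Hypothesis u_neq0 : u != 0.

Lemma ip_self_neq0 : ip u u != 0.
Proof. by rewrite ip_eq0. Qed.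

Lemma ip_perp_proj x : ip (perp_proj u x) u = 0.
Proof. by rewrite /perp_proj ipBl ipZl divfK ?subrr // ip_self_neq0. Qed.

Lemma perp_proj_projection : projection ip (perp_projL u).
Proof.
have saS : self_adjoint ip (perp_projL u).
  move=> x y /=; rewrite /perp_proj ipBl ipBr ipZl ipZr rmorphM fmorphV.
  by rewrite -!ipC mulrAC [in RHS]mulrC mulrA.
have idS : Defs.idempotent (perp_projL u).
  by move=> x /=; rewrite {1}/perp_proj ip_perp_proj mul0r scale0r subr0.
by split=> //; exact: self_adjoint_idempotent_bounded.
Qed.

Lemma perp_proj_finite_corank : finite_corank (perp_projL u).
Proof.
exists [:: u] => x /=; exists (fun=> ip x u / ip u u).
by rewrite big_ord1 /perp_proj opprB addrC subrK.
Qed.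

Lemma perp_proj_commute (P : {linear V -> V}) :
  self_adjoint ip P -> Defs.idempotent P ->
  ops_commute (perp_projL u) P <-> fixed_or_killed P u.
Proof.
(* S (P u) = P (S u) = 0 gives P u = c u, and idempotence forces c ^+ 2 = c. *)
move=> saP idP; split=> [/(_ u) /= | Pu x /=].
  rewrite {2}/perp_proj mulfV ?ip_self_neq0 // scale1r subrr linear0 /perp_proj.
  move/subr0_eq; set c := _ / _ => Pu.
  have /eqP : c *: u = (c * c) *: u by rewrite -scalerA -Pu -linearZ /= -Pu idP.
  rewrite eq_sym -subr_eq0 -scalerBl scaler_eq0 (negbTE u_neq0) orbF.
  have -> : c * c - c = c * (c - 1) by ring.
  rewrite mulf_eq0 subr_eq0 => /orP[] /eqP c01; rewrite /fixed_or_killed Pu c01.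
    by right; rewrite scale0r.
  by left; rewrite scale1r.
have PZu c : P (c *: u) = c *: P u by exact: linearZ.
rewrite /perp_proj linearB /= PZu saP.
by case: Pu => ->; rewrite ?ip0r ?mul0r ?scale0r ?scaler0.
Qed.

End NonzeroVector.

Lemma commute_finite_corank_fixed_or_killed (P Q : {linear V -> V}) :
  projection ip P -> projection ip Q ->
  (forall S : {linear V -> V}, projection ip S -> finite_corank S ->
     (ops_commute S P <-> ops_commute S Q)) ->
  forall a, fixed_or_killed P a <-> fixed_or_killed Q a.
Proof.
move=> [_ saP idP] [_ saQ idQ] PQ a; have [->|a_neq0] := eqVneq a 0.
  by rewrite /fixed_or_killed !linear0; split=> _; right.
rewrite -(perp_proj_commute a_neq0 saP idP) -(perp_proj_commute a_neq0 saQ idQ).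
exact: PQ (perp_proj_projection a_neq0) (perp_proj_finite_corank a).
Qed.

Lemma commute_finite_corank_projections (P Q : {linear V -> V}) :
  projection ip P -> projection ip Q ->
  (forall S : {linear V -> V}, projection ip S -> finite_corank S ->
     (ops_commute S P <-> ops_commute S Q)) ->
  P =1 Q \/ (forall x, P x = x - Q x).
Proof.
move=> Pproj Qproj PQ; case: (Pproj) => _ _ idP.
exact/same_fixed_or_killed/commute_finite_corank_fixed_or_killed.
Qed.

End InnerProduct.

Theorem lemma5 (R : realType) :
  (forall (V : lmodType R) (ip : V -> V -> R),
     hilbert_space (fun a : R => a) ip -> infinite_dimensional V ->
     forall P Q : {linear V -> V}, projection ip P -> projection ip Q ->
     (forall S : {linear V -> V}, projection ip S -> finite_corank S ->
        (ops_commute S P <-> ops_commute S Q)) ->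
     P =1 Q \/ (forall x : V, P x = x - Q x))
  /\
  (forall (V : lmodType (complex R)) (ip : V -> V -> complex R),
     hilbert_space (@Num.conj _) ip -> infinite_dimensional V ->
     forall P Q : {linear V -> V}, projection ip P -> projection ip Q ->
     (forall S : {linear V -> V}, projection ip S -> finite_corank S ->
        (ops_commute S P <-> ops_commute S Q)) ->
     P =1 Q \/ (forall x : V, P x = x - Q x)).
Proof.
split=> V ip [ipP _] _.
- exact: (@commute_finite_corank_projections _ _ idfun).
- exact: (@commute_finite_corank_projections _ _ Num.conj).
Qed.
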